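(* Let $f$ and $g$ be multiplicative functions with $|f(n)|,|g(n)|\le1$ for all $n$, and let $h$ be defined by $g=f*h$. Suppose $\mathbb{D}_\beta(f,g)<\infty$ for some $\beta>0$, and let $\sigma>1/2$ with $\sigma\ge\beta$. Then the series $\sum_{n=1}^\infty\frac{|h(n)|^2}{n^\sigma}$ converges if the quantity $H(\sigma)$ is finite.
   Context: $(f*h)(n)=\sum_{dm=n}f(d)h(m)$. $\mathbb{D}_\beta(f,g)^2:=\sum_p \frac{1-\Re(f(p)\overline{g(p)})}{p^\beta}$ (sum over primes). $H(\sigma):=\sum_{p\le 4^{1/\sigma}}\sum_{k=0}^\infty \frac{|h(p^k)|^2}{p^{k\sigma}}$. *)

From mathcomp Require Import all_boot all_order all_algebra.
From mathcomp Require Import all_classical all_reals all_analysis.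
From mathcomp Require Import complex.
Set Implicit Arguments. Unset Strict Implicit. Unset Printing Implicit Defensive.
Import Order.TTheory GRing.Theory Num.Theory.
Local Open Scope ring_scope.

Notation normc := (@ComplexField.Normc.normc _).

Section Defs.

Variable R : realType.

(* arithmetic functions are maps nat -> R[i]; the value at 0 is irrelevant *)
Definition arith_multiplicative (f : nat -> R[i]) : Prop :=
  f 1%N = 1 /\ forall m n : nat, coprime m n -> f (m * n)%N = f m * f n.

Definition dconv (f h : nat -> R[i]) (n : nat) : R[i] :=
  \sum_(d <- divisors n) f d * h (n %/ d)%N.

(* D_beta(f,g)^2 = sum_p (1 - Re(f(p) conj(g(p)))) / p^beta, an extended real
   (series of nonnegative terms when |f|,|g| <= 1) *)
Definition Dist2 (beta : R) (f g : nat -> R[i]) : \bar R :=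
  (\sum_(0 <= p <oo | prime p)
     ((1 - complex.Re (f p * (g p)^*)%C) / (p%:R `^ beta))%:E)%E.

Definition Hsig (sigma : R) (h : nat -> R[i]) : \bar R :=
  (\sum_(0 <= p <oo | prime p && (p%:R <= 4 `^ sigma^-1)%R)
     \sum_(0 <= k <oo) ((normc (h (p ^ k)%N)) ^+ 2 / ((p ^ k)%N%:R `^ sigma))%:E)%E.

End Defs.

From mathcomp Require Import all_boot all_order all_algebra.
From mathcomp Require Import all_classical all_reals all_analysis.
From mathcomp Require Import complex.
From mathcomp Require Import ring lra zify.
Set Implicit Arguments. Unset Strict Implicit. Unset Printing Implicit Defensive.
Import Order.TTheory GRing.Theory Num.Theory numFieldNormedType.Exports.

(* Put a(n) = |h(n)|^2 / n^sigma.  The Dirichlet quotient h of two multiplicative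
   functions is multiplicative, hence so is a, and every partial sum of a is
   bounded by a truncated Euler product prod_p sum_k a(p^k), which is at most
   exp (sum_p sum_(k >= 1) a(p^k)).  Primes p <= 4^(1/sigma) contribute at most
   H(sigma).  For the other primes, h(p) = g(p) - f(p) gives
   a(p) <= |g(p) - f(p)|^2 / p^beta <= 2 (1 - Re f(p) conj(g(p))) / p^beta, which
   sums to at most 2 D_beta(f,g)^2, while the recursion for g(p^k) gives
   |h(p^k)| <= 2^k, so the terms with k >= 2 form a geometric series of ratio
   4 / p^sigma < 1, bounded by a multiple of p^(-2 sigma); this is summable
   because 2 sigma > 1. *)

Lemma divisors_coprime_mul m n : 0 < m -> 0 < n -> coprime m n ->
  perm_eq (divisors (m * n)) [seq d1 * d2 | d1 <- divisors m, d2 <- divisors n].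
Proof.
move=> m0 n0 cmn.
apply: uniq_perm; first exact: divisors_uniq.
  apply: allpairs_uniq; try exact: divisors_uniq.
  move=> [a b] [c e] /allpairsP [[x y] [/= xm yn [-> ->]]].
  move=> /allpairsP [[z w] [/= zm wn [-> ->]]] /=.
  move: xm yn zm wn; rewrite -!dvdn_divisors // => xm yn zm wn E.
  have gcd_m u v : u %| m -> v %| n -> gcdn m (u * v) = u.
    move=> um vn; rewrite Gauss_gcdl; first exact/gcdn_idPr.
    exact: coprime_dvdr vn cmn.
  have gcd_n u v : u %| m -> v %| n -> gcdn n (u * v) = v.
    move=> um vn; rewrite Gauss_gcdr; first exact/gcdn_idPr.
    by rewrite coprime_sym; apply: coprime_dvdl um cmn.
  by congr pair; [rewrite -(gcd_m x y) // E gcd_m | rewrite -(gcd_n x y) // E gcd_n].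
move=> d; rewrite -dvdn_divisors ?muln_gt0 ?m0 //; apply/idP/allpairsP.
  move=> dmn; exists (gcdn d m, gcdn d n); rewrite /= -!dvdn_divisors //.
  rewrite !dvdn_gcdr; split=> //; apply/eqP; rewrite eqn_dvd; apply/andP; split.
    rewrite muln_gcdl dvdn_gcd; apply/andP; split.
      by rewrite muln_gcdr dvdn_gcd dvdn_mulr //= mulnC dvdn_mull.
    by rewrite muln_gcdr dvdn_gcd dvdn_mull.
  rewrite Gauss_dvd ?dvdn_gcdl //.
  by apply: coprime_dvdl (dvdn_gcdr _ _) _; apply: coprime_dvdr (dvdn_gcdr _ _) cmn.
by move=> [[a b] [/= + + ->]]; rewrite -!dvdn_divisors //; apply: dvdn_mul.
Qed.

Lemma divisors_pfactor p k : prime p ->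
  perm_eq (divisors (p ^ k)) [seq p ^ j | j <- iota 0 k.+1].
Proof.
move=> pp; have p0 := prime_gt0 pp.
apply: uniq_perm; first exact: divisors_uniq.
  by rewrite map_inj_uniq ?iota_uniq //; apply: expnI; apply: prime_gt1.
move=> d; rewrite -dvdn_divisors ?expn_gt0 ?p0 //; apply/dvdn_pfactor/mapP => //.
  by move=> [j jk ->]; exists j => //; rewrite mem_iota.
by move=> [j]; rewrite mem_iota => /andP[_ jk] ->; exists j.
Qed.

Definition smooth_over (s : seq nat) (n : nat) : bool :=
  (0 < n) && all (fun q => q \in s) (primes n).

Local Open Scope ring_scope.

Section NonnegativeSums.
Variable R : numDomainType.

Lemma ler_sum_subpred (I : Type) (r : seq I) (P Q : pred I) (F : I -> R) :
  (forall i, P i -> Q i) -> (forall i, Q i -> 0 <= F i) ->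
  \sum_(i <- r | P i) F i <= \sum_(i <- r | Q i) F i.
Proof.
move=> PQ F0; rewrite big_mkcond [X in _ <= X]big_mkcond; apply: ler_sum => i _.
by case: ifP => [/PQ -> // | _]; case: ifP => // /F0.
Qed.

Lemma ler_sum_inj_in (T1 T2 : eqType) (r : seq T1) (P : pred T1) (r' : seq T2)
    (phi : T1 -> T2) (G : T2 -> R) :
  uniq r -> uniq r' -> {in [pred x | (x \in r) && P x] &, injective phi} ->
  (forall x, x \in r -> P x -> phi x \in r') -> (forall y, 0 <= G y) ->
  \sum_(x <- r | P x) G (phi x) <= \sum_(y <- r') G y.
Proof.
move=> ur ur' inj sub G0.
rewrite -big_filter -(big_map phi xpredT G); set l := map phi _.
have ul : uniq l.
  rewrite map_inj_in_uniq ?filter_uniq // => x y; rewrite !mem_filter.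
  by move=> /andP[Px rx] /andP[Py ry]; apply: inj; rewrite inE ?rx ?ry ?Px ?Py.
have sl : {subset l <= r'}.
  by move=> y /mapP[x]; rewrite mem_filter => /andP[Px rx] ->; apply: sub.
have pl : perm_eq [seq y <- r' | y \in l] l.
  apply: uniq_perm; rewrite ?filter_uniq //.
  by move=> y; rewrite mem_filter; case: (boolP (y \in l)) => // /sl ->.
rewrite [X in _ <= X](bigID (mem l)) /= -[X in X <= _]addr0.
apply: lerD; last exact: sumr_ge0.
by rewrite -[X in _ <= X]big_filter (perm_big _ pl).
Qed.

End NonnegativeSums.

Section EulerProduct.
Variables (R : realType) (a : nat -> R).
Hypothesis a_ge0 : forall n, 0 <= a n.
Hypothesis a1 : a 1%N = 1.
Hypothesis aM : forall m n, (0 < m)%N -> (0 < n)%N -> coprime m n ->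
  a (m * n)%N = a m * a n.

Lemma smooth_sum_le_prod N (s : seq nat) : all prime s ->
  \sum_(0 <= n < N.+1 | smooth_over s n) a n <=
  \prod_(p <- s) \sum_(0 <= k < N.+1) a (p ^ k)%N.
Proof.
elim: s => [_|p s IH /andP[pp ps]].
  have smooth_nil n : smooth_over [::] n = (n == 1%N).
    rewrite /smooth_over; case: n => [|[|n]] //=.
    by case: (primes n.+2) (primes_eq0 n.+2).
  rewrite big_nil (eq_bigl _ _ smooth_nil) -big_filter.
  case: N => [|N]; first by rewrite /= big_nil ler01.
  by rewrite filter_pred1_uniq ?iota_uniq ?mem_iota // big_seq1 a1.
(* n is determined by (logn p n, n`_p^'), which embeds the (p :: s)-smooth n
   into the pairs (k, m) indexing the expanded product. *)
pose G (x : nat * nat) := a (p ^ x.1)%N * (if smooth_over s x.2 then a x.2 else 0).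
have G0 y : 0 <= G y by rewrite /G; case: ifP => _; rewrite ?mulr0 // mulr_ge0.
have aG n : smooth_over (p :: s) n -> a n = G (logn p n, n`_p^')%N.
  move=> /andP[n0 alln]; rewrite /G /=.
  have -> : smooth_over s n`_p^'.
    rewrite /smooth_over part_gt0 primes_part all_filter.
    apply/allP => q qn; apply/implyP; rewrite !inE => qp.
    by move/allP: alln => /(_ q qn); rewrite inE (negPf qp).
  by rewrite -p_part -aM ?part_gt0 ?coprime_partC // partnC.
apply: le_trans (_ : \sum_(y <- [seq (x1, x2) | x1 <- iota 0 N.+1, x2 <- iota 0 N.+1])
    G y <= _).
  rewrite (eq_bigr _ aG); apply: ler_sum_inj_in => //.
  - exact: iota_uniq.
  - by apply: allpairs_uniq; rewrite ?iota_uniq // => -[? ?] [? ?] _ _.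
  - move=> n1 n2; rewrite !inE => /andP[_ /andP[n10 _]] /andP[_ /andP[n20 _]] [E1 E2].
    by rewrite -(partnC p n10) -(partnC p n20) !p_part E1 E2.
  move=> n; rewrite mem_iota add0n => nN /andP[n0 _].
  have pn : (n`_p <= n)%N by apply: dvdn_leq => //; apply: dvdn_part.
  apply: allpairs_f; rewrite mem_iota add0n; apply: leq_ltn_trans nN.
    by apply: leq_trans pn; rewrite p_part ltnW // ltn_expl // prime_gt1.
  by apply: dvdn_leq => //; apply: dvdn_part.
rewrite big_allpairs big_cons /= big_distrl /=; apply: ler_sum => k _.
by rewrite /G /= -big_distrr /= ler_wpM2l // -big_mkcond IH.
Qed.

Lemma multiplicative_sum_le_expR N :
  \sum_(0 <= n < N) a n.+1 <=
  expR (\sum_(0 <= p < N.+1 | prime p) \sum_(0 <= k < N) a (p ^ k.+1)%N).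
Proof.
pose s := [seq q <- index_iota 0 N.+1 | prime q].
have sum_smooth : \sum_(0 <= n < N) a n.+1 <=
    \sum_(0 <= n < N.+1 | smooth_over s n) a n.
  rewrite [X in _ <= X]big_ltn_cond //= [X in _ <= X]big_add1 /=.
  rewrite big_nat_cond [X in _ <= X]big_nat_cond; apply: ler_sum_subpred => //.
  move=> n /andP[/andP[_ nN] _]; rewrite nN /smooth_over /=; apply/allP => q.
  rewrite mem_primes => /and3P[qp _ qn]; rewrite mem_filter qp mem_iota /=.
  by rewrite ltnS; apply: leq_trans (dvdn_leq _ qn) nN.
apply: le_trans sum_smooth _; apply: le_trans (smooth_sum_le_prod N (filter_all _ _)) _.
rewrite -[X in _ <= expR X]big_filter expR_sum; apply: ler_prod => p _; apply/andP; split.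
  by apply: sumr_ge0 => k _; apply: a_ge0.
by rewrite big_nat_recl // expn0 a1 expR_ge1Dx.
Qed.

End EulerProduct.

Lemma powR_exprn (R : realType) (x s : R) k : 0 <= x -> (x ^+ k) `^ s = (x `^ s) ^+ k.
Proof.
by move=> x0; rewrite -powR_mulrn // -powRrM mulrC powRrM powR_mulrn // powR_ge0.
Qed.

Lemma geometric_sum_le (R : numFieldType) (q : R) J : 0 <= q < 1 ->
  \sum_(0 <= j < J) q ^+ j <= (1 - q)^-1.
Proof.
move=> /andP[q0 q1]; have q1' : 0 < 1 - q by rewrite subr_gt0.
rewrite -(ler_pM2l q1') mulfV ?gt_eqF //.
have -> : (1 - q) * \sum_(0 <= j < J) q ^+ j = 1 - q ^+ J.
  by rewrite big_mkord -opprB mulNr -subrX1 opprB.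
by rewrite lerBlDr lerDl exprn_ge0.
Qed.

Lemma pseries_partial_sum_bounded (R : realType) (s : R) : 1 < s ->
  exists Z : R, forall N, \sum_(1 <= n < N) (n%:R `^ s)^-1 <= Z.
Proof.
move=> s1; have s0 : 0 < s by apply: lt_trans s1.
pose q : R := 2%:R / 2%:R `^ s.
have p2 : 0 < (2%:R : R) `^ s by apply: powR_gt0.
have q0 : 0 <= q by rewrite divr_ge0 ?ler0n ?powR_ge0.
have q1 : q < 1.
  rewrite ltr_pdivrMr // mul1r.
  rewrite -[X in _ < X](mulr_powRB1 (x := 2%:R)) ?ler0n // -[X in X < _]mulr1.
  rewrite ltr_pM2l ?ltr0n // /powR pnatr_eq0 /= expR_gt1 mulr_gt0 ?subr_gt0 //.
  by rewrite ln_gt0 // ltr1n.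
exists (1 - q)^-1 => N.
(* Cauchy condensation: the block 2^J <= n < 2^(J+1) contributes at most q^J. *)
have dyadic J : \sum_(1 <= n < 2 ^ J) (n%:R `^ s)^-1 <= \sum_(0 <= j < J) q ^+ j.
  elim: J => [|J IH]; first by rewrite expn0 big_geq // big_geq.
  rewrite (big_cat_nat (n := 2 ^ J)) ?expn_gt0 //=; last by rewrite leq_exp2l.
  rewrite big_nat_recr //=; apply: lerD => //.
  apply: le_trans (_ : \sum_(2 ^ J <= i < 2 ^ J.+1) ((2 ^ J)%:R `^ s)^-1 <= _).
    apply: ler_sum_nat => n /andP[Jn _].
    have n0 : (0 < n)%N by apply: leq_trans Jn; rewrite expn_gt0.
    rewrite lef_pV2 ?posrE ?powR_gt0 ?ltr0n ?expn_gt0 //.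
    by apply: ge0_ler_powR; rewrite ?nnegrE ?ler0n ?ler_nat // ltW.
  rewrite sumr_const_nat expnS mul2n -addnn addnK natrX powR_exprn ?ler0n //.
  by rewrite /q expr_div_n -natrX mulr_natl.
case: N => [|N]; first by rewrite big_geq // invr_ge0 subr_ge0 ltW.
have geo : \sum_(0 <= j < N.+1) q ^+ j <= (1 - q)^-1.
  by apply: geometric_sum_le; rewrite q0.
apply: le_trans (le_trans (dyadic N.+1) geo).
rewrite (big_cat_nat (n := N.+1) (p := 2 ^ N.+1)) //=; last exact/ltnW/ltn_expl.
by rewrite lerDl; apply: sumr_ge0 => i _; rewrite invr_ge0 powR_ge0.
Qed.

Section ComplexNorm.
Variable R : realType.
Implicit Types x y z : R[i].

Lemma normc_ge0 z : 0 <= normc z.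
Proof. by case: z => a b /=; rewrite sqrtr_ge0. Qed.

Lemma sqr_normc_ReIm z : normc z ^+ 2 = complex.Re z ^+ 2 + complex.Im z ^+ 2.
Proof. by case: z => a b /=; rewrite sqr_sqrtr // addr_ge0 // sqr_ge0. Qed.

Lemma normc_sum_le (I : Type) (r : seq I) (P : pred I) (F : I -> R[i]) :
  normc (\sum_(i <- r | P i) F i) <= \sum_(i <- r | P i) normc (F i).
Proof.
elim/big_rec2: _ => [|i y1 y2 _ IH]; first by rewrite ComplexField.Normc.normc0.
by apply: le_trans (le_normcD _ _) _; rewrite lerD2l.
Qed.

Lemma sqr_normc_sub_le x y : normc x <= 1 -> normc y <= 1 ->
  normc (y - x) ^+ 2 <= 2%:R * (1 - complex.Re (x * y^*)%C).
Proof.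
move=> nx ny.
have nx2 : normc x ^+ 2 <= 1 by rewrite expr_le1 // normc_ge0.
have ny2 : normc y ^+ 2 <= 1 by rewrite expr_le1 // normc_ge0.
move: nx2 ny2; rewrite !sqr_normc_ReIm; case: x {nx} => a b; case: y {ny} => c e /=.
by move=> *; nra.
Qed.

End ComplexNorm.

Section DirichletQuotient.
Variable R : realType.
Local Notation C := R[i].

Lemma dconv_coprime_mul (F H : nat -> C) m n :
  (0 < m)%N -> (0 < n)%N -> coprime m n ->
  dconv F H (m * n) = \sum_(d1 <- divisors m) \sum_(d2 <- divisors n)
    F (d1 * d2)%N * H (m %/ d1 * (n %/ d2))%N.
Proof.
move=> m0 n0 cmn; rewrite /dconv (perm_big _ (divisors_coprime_mul m0 n0 cmn)).
rewrite big_allpairs_dep /=; apply: eq_big_seq => d1; rewrite -dvdn_divisors // => d1m.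
apply: eq_big_seq => d2; rewrite -dvdn_divisors // => d2n.
have d10 : (0 < d1)%N by apply: dvdn_gt0 d1m.
have d20 : (0 < d2)%N by apply: dvdn_gt0 d2n.
by congr (_ * H _); rewrite -{1}(divnK d1m) -{1}(divnK d2n) mulnACA mulnK // muln_gt0 d10.
Qed.

Lemma dconv_pfactor (F H : nat -> C) p k : prime p ->
  dconv F H (p ^ k) = \sum_(0 <= j < k.+1) F (p ^ j)%N * H (p ^ (k - j))%N.
Proof.
move=> pp; rewrite /dconv (perm_big _ (divisors_pfactor k pp)) big_map.
apply: eq_big_seq => j; rewrite mem_iota add0n => /andP[_ jk].
by rewrite expnB // prime_gt0.
Qed.

Variables f g h : nat -> C.
Hypothesis hf : arith_multiplicative f.
Hypothesis hg : arith_multiplicative g.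
Hypothesis hconv : forall n : nat, (0 < n)%N -> g n = dconv f h n.

Lemma dconv_quotient1 : h 1%N = 1.
Proof.
have := @hconv 1%N isT; rewrite /dconv (_ : divisors 1 = [:: 1%N]) //.
by rewrite big_seq1 hg.1 hf.1 mul1r divn1 => <-.
Qed.

(* The two sides expand g(mn) and g(m) g(n), using f(d1 d2) = f(d1) f(d2). *)
Lemma dconv_quotient_defect m n : (0 < m)%N -> (0 < n)%N -> coprime m n ->
  \sum_(d1 <- divisors m) \sum_(d2 <- divisors n)
    f d1 * f d2 * (h (m %/ d1 * (n %/ d2))%N - h (m %/ d1) * h (n %/ d2)) = 0.
Proof.
move=> m0 n0 cmn.
have gM : g (m * n)%N - g m * g n = 0 by rewrite hg.2 // subrr.
rewrite hconv ?muln_gt0 ?m0 // dconv_coprime_mul // !hconv // /dconv in gM.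
rewrite -[RHS]gM big_distrl /= -sumrB; apply: eq_big_seq => d1.
rewrite -dvdn_divisors // => d1m; rewrite big_distrr /= -sumrB.
apply: eq_big_seq => d2; rewrite -dvdn_divisors // => d2n.
rewrite hf.2; first by ring.
by apply: coprime_dvdl d1m _; apply: coprime_dvdr d2n cmn.
Qed.

Lemma dconv_quotientM m n : (0 < m)%N -> (0 < n)%N -> coprime m n ->
  h (m * n)%N = h m * h n.
Proof.
move=> m0 n0 cmn; move: {2}(m * n)%N (leqnn (m * n)) => N.
elim: N m n m0 n0 cmn => [|N IH] m n m0 n0 cmn le_mn.
  by move: le_mn; rewrite leqn0 muln_eq0 => /orP[] /eqP E; move: m0 n0; rewrite E.
have proper d1 d2 : (d1 %| m)%N -> (d2 %| n)%N -> (d1 != 1%N) || (d2 != 1%N) ->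
    h (m %/ d1 * (n %/ d2))%N = h (m %/ d1) * h (n %/ d2).
  move=> d1m d2n ne.
  have d10 : (0 < d1)%N by apply: dvdn_gt0 d1m.
  have d20 : (0 < d2)%N by apply: dvdn_gt0 d2n.
  apply: IH.
  - by rewrite divn_gt0 // dvdn_leq.
  - by rewrite divn_gt0 // dvdn_leq.
  - by apply: (coprime_dvdl (dvdn_div d1m)); apply: (coprime_dvdr (dvdn_div d2n)).
  have -> : (m %/ d1 * (n %/ d2) = (m * n) %/ (d1 * d2))%N.
    by rewrite -{2}(divnK d1m) -{2}(divnK d2n) mulnACA mulnK // muln_gt0 d10.
  rewrite -ltnS; apply: leq_trans le_mn; apply: ltn_Pdiv; last by rewrite muln_gt0 m0.
  case/orP: ne => ne.
    by apply: leq_trans (leq_pmulr _ d20); rewrite ltn_neqAle eq_sym ne.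
  by apply: leq_trans (leq_pmull _ d10); rewrite ltn_neqAle eq_sym ne.
have := dconv_quotient_defect m0 n0 cmn.
rewrite (bigD1_seq 1%N) ?divisor1 ?divisors_uniq //= [X in _ + X]big1_seq ?addr0; last first.
  move=> d1 /andP[ne1 d1in]; rewrite big_seq; apply: big1 => d2 d2in.
  by rewrite proper ?subrr ?mulr0 ?ne1 // dvdn_divisors.
rewrite (bigD1_seq 1%N) ?divisor1 ?divisors_uniq //= [X in _ + X]big1_seq ?addr0; last first.
  move=> d2 /andP[ne2 d2in].
  by rewrite proper ?subrr ?mulr0 ?ne2 ?orbT ?dvd1n // dvdn_divisors.
by rewrite hf.1 !divn1 !mul1r => /eqP; rewrite subr_eq0 => /eqP.
Qed.

Lemma dconv_quotient_multiplicative : arith_multiplicative h.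
Proof.
split=> [|m n]; first exact: dconv_quotient1.
have [-> | m0] := posnP m.
  by rewrite /coprime gcd0n => /eqP ->; rewrite muln1 dconv_quotient1 mulr1.
have [-> | n0] := posnP n.
  by rewrite /coprime gcdn0 => /eqP ->; rewrite mul1n dconv_quotient1 mul1r.
exact: dconv_quotientM.
Qed.

Lemma dconv_quotient_prime p : prime p -> h p = g p - f p.
Proof.
move=> pp; have := @hconv (p ^ 1)%N.
rewrite expn_gt0 prime_gt0 // dconv_pfactor // big_nat_recl // big_nat1 => /(_ isT).
rewrite subn0 subnn expn0 !expn1 hf.1 dconv_quotient1 mul1r mulr1 => ->.
by rewrite addrK.
Qed.

Hypothesis normf : forall n : nat, (0 < n)%N -> normc (f n) <= 1.
Hypothesis normg : forall n : nat, (0 < n)%N -> normc (g n) <= 1.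

(* From h(p^k) = g(p^k) - sum_{1 <= j <= k} f(p^j) h(p^(k-j)) and 1 + sum_{j < k} 2^j = 2^k. *)
Lemma normc_dconv_quotient_pfactor_le p k : prime p -> normc (h (p ^ k)%N) <= 2%:R ^+ k.
Proof.
move=> pp; have p0 := prime_gt0 pp.
elim/ltn_ind: k => k IH.
have := @hconv (p ^ k)%N; rewrite expn_gt0 p0 dconv_pfactor // big_nat_recl // => /(_ isT).
rewrite expn0 hf.1 mul1r subn0 => /(canLR (addrK _)) <-.
apply: le_trans (le_normcD _ _) _; rewrite normcN.
have -> : (2%:R ^+ k : R) = 1 + \sum_(0 <= j < k) 2%:R ^+ (k - j.+1).
  rewrite big_nat_rev /= add0n.
  rewrite (eq_big_nat _ _ (F2 := fun i => 2%:R ^+ i)); last first.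
    by move=> i /andP[_ ik]; congr (_ ^+ _); lia.
  have two1 : (2%:R - 1 : R) = 1 by lra.
  by rewrite big_mkord -[LHS](subrK 1) subrX1 addrC two1 mul1r.
apply: lerD; first by apply: normg; rewrite expn_gt0 p0.
apply: le_trans (normc_sum_le _ _ _) _; apply: ler_sum_nat => j /andP[_ jk].
rewrite ComplexField.Normc.normcM -[X in _ <= X]mul1r.
apply: ler_pM; rewrite ?normc_ge0 //; first by apply: normf; rewrite expn_gt0 p0.
by apply: IH; lia.
Qed.

End DirichletQuotient.

Definition sqnorm_term (R : realType) (s : R) (h : nat -> R[i]) (n : nat) : R :=
  normc (h n) ^+ 2 / n%:R `^ s.

Section SqnormTerm.
Variables (R : realType) (s : R) (h : nat -> R[i]).

Lemma sqnorm_term_ge0 n : 0 <= sqnorm_term s h n.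
Proof. by rewrite divr_ge0 ?exprn_ge0 ?normc_ge0 ?powR_ge0. Qed.

Hypothesis hM : arith_multiplicative h.

Lemma sqnorm_term1 : sqnorm_term s h 1%N = 1.
Proof. by rewrite /sqnorm_term hM.1 ComplexField.Normc.normc1 powR1 expr1n divr1. Qed.

Lemma sqnorm_termM m n : (0 < m)%N -> (0 < n)%N -> coprime m n ->
  sqnorm_term s h (m * n)%N = sqnorm_term s h m * sqnorm_term s h n.
Proof.
move=> m0 n0 cmn; rewrite /sqnorm_term hM.2 // ComplexField.Normc.normcM.
by rewrite natrM powRM ?ler0n // exprMn mulf_div.
Qed.

End SqnormTerm.

Section PrimePowerSums.
Variables (R : realType) (f g h : nat -> R[i]) (beta sigma : R).
Hypothesis hf : arith_multiplicative f.
Hypothesis hg : arith_multiplicative g.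
Hypothesis normf : forall n : nat, (0 < n)%N -> normc (f n) <= 1.
Hypothesis normg : forall n : nat, (0 < n)%N -> normc (g n) <= 1.
Hypothesis hconv : forall n : nat, (0 < n)%N -> g n = dconv f h n.
Hypothesis half_lt_sigma : 1 / 2 < sigma.
Hypothesis beta_le_sigma : beta <= sigma.
Hypothesis Dist2_fin : (Dist2 beta f g < +oo)%E.
Hypothesis Hsig_fin : (Hsig sigma h < +oo)%E.

Let a := sqnorm_term sigma h.
Let d (p : nat) : R := (1 - complex.Re (f p * (g p)^*)%C) / (p%:R `^ beta).

Lemma dist_term_ge0 p : prime p -> 0 <= d p.
Proof.
move=> pp; have p0 := prime_gt0 pp.
rewrite divr_ge0 ?powR_ge0 // -(pmulr_rge0 _ (ltr0n _ 2)).
exact: le_trans (exprn_ge0 2 (normc_ge0 _)) (sqr_normc_sub_le (normf p0) (normg p0)).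
Qed.

Lemma sqnorm_term_prime_le p : prime p -> a p <= 2%:R * d p.
Proof.
move=> pp; have p0 := prime_gt0 pp.
have pb : 0 < p%:R `^ beta by rewrite powR_gt0 // ltr0n.
have pbs : p%:R `^ beta <= p%:R `^ sigma by rewrite ler_powR // ler1n.
rewrite /a /sqnorm_term (dconv_quotient_prime hf hg hconv pp) /d mulrA.
apply: le_trans (_ : normc (g p - f p) ^+ 2 / p%:R `^ beta <= _).
  by rewrite ler_wpM2l ?exprn_ge0 ?normc_ge0 // lef_pV2 ?posrE // (lt_le_trans pb).
by rewrite ler_wpM2r ?invr_ge0 ?powR_ge0 // sqr_normc_sub_le ?normf ?normg.
Qed.

Lemma sqnorm_term_pfactor_le p k : prime p -> a (p ^ k)%N <= (4%:R / p%:R `^ sigma) ^+ k.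
Proof.
move=> pp; have hk := normc_dconv_quotient_pfactor_le hf hconv normf normg k pp.
have hk2 : normc (h (p ^ k)%N) ^+ 2 <= 4%:R ^+ k.
  have -> : 4%:R ^+ k = 2%:R ^+ k * 2%:R ^+ k :> R by rewrite -exprMn -natrM.
  by rewrite expr2 ler_pM ?normc_ge0.
rewrite /a /sqnorm_term expr_div_n natrX powR_exprn ?ler0n //.
by rewrite ler_wpM2r // invr_ge0 exprn_ge0 // powR_ge0.
Qed.

Lemma Dist2_partial_le M : \sum_(0 <= p < M | prime p) d p <= fine (Dist2 beta f g).
Proof.
have D0 : (0 <= Dist2 beta f g)%E.
  by apply: nneseries_ge0 => p _ pp; rewrite lee_fin dist_term_ge0.
rewrite -lee_fin fineK ?ge0_fin_numE // -sumEFin.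
by apply: nneseries_lim_ge => p _ pp; rewrite lee_fin dist_term_ge0.
Qed.

Lemma Hsig_partial_le M K :
  \sum_(0 <= p < M | prime p && (p%:R <= 4 `^ sigma^-1)) \sum_(0 <= k < K) a (p ^ k)%N
  <= fine (Hsig sigma h).
Proof.
have inner_ge0 p : (0 <= \sum_(0 <= k <oo) (a (p ^ k)%N)%:E)%E.
  by apply: nneseries_ge0 => k _ _; rewrite lee_fin sqnorm_term_ge0.
have H0 : (0 <= Hsig sigma h)%E by apply: nneseries_ge0 => p _ _; apply: inner_ge0.
rewrite -lee_fin fineK ?ge0_fin_numE // -sumEFin.
apply: le_trans (nneseries_lim_ge M _); last by move=> p _ _; apply: inner_ge0.
apply: lee_sum => p _; rewrite -sumEFin.
by apply: nneseries_lim_ge => k _ _; rewrite lee_fin sqnorm_term_ge0.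
Qed.

Lemma large_prime_ratio : exists2 rho : R, 0 <= rho < 1 &
  forall p, prime p -> 4 `^ sigma^-1 < p%:R -> 4%:R / p%:R `^ sigma <= rho.
Proof.
have s0 : 0 < sigma by apply: lt_trans half_lt_sigma; rewrite divr_gt0.
set T : R := 4 `^ sigma^-1.
have T0 : 0 <= T by apply: powR_ge0.
have exT : exists n, T < n%:R by exists (Num.Def.archi_bound T); apply: archi_boundP.
(* the least integer above T = 4^(1/sigma) gives the largest ratio *)
have [p0 Tp0 minp0] := ex_minnP exT.
have TS : T `^ sigma = 4 by rewrite -powRrM mulVf ?gt_eqF // powRr1 // ler0n.
have p0s : 4 < p0%:R `^ sigma.
  by rewrite -TS gt0_ltr_powR // nnegrE ltW // (le_lt_trans T0).
have p0s0 : 0 < p0%:R `^ sigma by apply: lt_trans p0s; rewrite ltr0n.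
exists (4%:R / p0%:R `^ sigma).
  by rewrite divr_ge0 ?ltW //= ltr_pdivrMr // mul1r.
move=> p pp Tp; have ps : 0 < p%:R `^ sigma by rewrite powR_gt0 // ltr0n prime_gt0.
rewrite ler_wpM2l // lef_pV2 ?posrE //.
by rewrite ge0_ler_powR ?nnegrE ?ler0n ?ler_nat ?minp0 // ltW.
Qed.

Lemma large_prime_power_sum_le rho N p : 0 <= rho < 1 -> prime p ->
  4%:R / p%:R `^ sigma <= rho ->
  \sum_(0 <= k < N) a (p ^ k.+1)%N <= 2%:R * d p + 16%:R / (1 - rho) / (p%:R `^ sigma) ^+ 2.
Proof.
move=> /andP[r0 r1] pp rp; have p0 := prime_gt0 pp.
have ps : 0 < p%:R `^ sigma by rewrite powR_gt0 // ltr0n.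
set r := 4%:R / p%:R `^ sigma.
have r_ge0 : 0 <= r by rewrite divr_ge0 // ltW.
have r_lt1 : r < 1 by apply: le_lt_trans r1.
have c0 : 0 <= 16%:R / (1 - rho) / (p%:R `^ sigma) ^+ 2.
  by rewrite !divr_ge0 ?subr_ge0 ?exprn_ge0 ?ltW.
case: N => [|N]; first by rewrite big_geq // addr_ge0 // mulr_ge0 // dist_term_ge0.
rewrite big_nat_recl //= expn1; apply: lerD; first exact: sqnorm_term_prime_le.
apply: le_trans (_ : \sum_(0 <= k < N) r ^+ 2 * r ^+ k <= _).
  apply: ler_sum_nat => k _; rewrite -exprD addnC addn2.
  exact: sqnorm_term_pfactor_le.
have r2 : r ^+ 2 = 16%:R / (p%:R `^ sigma) ^+ 2 by rewrite expr_div_n -natrX.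
rewrite -big_distrr /= r2 mulrAC; apply: ler_wpM2r.
  by rewrite invr_ge0 exprn_ge0 // ltW.
apply: ler_wpM2l; first by rewrite ler0n.
apply: le_trans (geometric_sum_le N _) _; first by rewrite r_ge0.
by rewrite lef_pV2 ?posrE ?subr_gt0 // lerD2l lerN2.
Qed.

Lemma small_prime_power_sums_le N :
  \sum_(0 <= p < N.+1 | prime p && (p%:R <= 4 `^ sigma^-1))
    \sum_(0 <= k < N) a (p ^ k.+1)%N <= fine (Hsig sigma h).
Proof.
apply: le_trans (Hsig_partial_le N.+1 N.+1); apply: ler_sum => p _.
by rewrite [X in _ <= X]big_nat_recl // lerDr sqnorm_term_ge0.
Qed.

Lemma large_prime_power_sums_bounded : exists K : R, forall N,
  \sum_(0 <= p < N.+1 | prime p && ~~ (p%:R <= 4 `^ sigma^-1))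
    \sum_(0 <= k < N) a (p ^ k.+1)%N <= K.
Proof.
have [rho rho01 rhoP] := large_prime_ratio.
have two_sigma_gt1 : 1 < sigma * 2%:R by move: half_lt_sigma; lra.
have [Z HZ] := pseries_partial_sum_bounded two_sigma_gt1.
set c : R := 16%:R / (1 - rho).
have c0 : 0 <= c by case/andP: rho01 => ? ?; rewrite divr_ge0 // subr_ge0 ltW.
exists (2%:R * fine (Dist2 beta f g) + c * Z) => N.
apply: le_trans (_ : \sum_(0 <= p < N.+1 | prime p && ~~ (p%:R <= 4 `^ sigma^-1))
    (2%:R * d p + c / (p%:R `^ sigma) ^+ 2) <= _).
  apply: ler_sum => p /andP[pp]; rewrite -ltNge => Tp.
  exact: large_prime_power_sum_le (rhoP p pp Tp).
rewrite big_split /= -!big_distrr /=; apply: lerD.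
  apply: ler_wpM2l; first by rewrite ler0n.
  apply: le_trans (Dist2_partial_le N.+1).
  by apply: ler_sum_subpred => [p /andP[] // | p]; apply: dist_term_ge0.
apply: ler_wpM2l => //; apply: le_trans (HZ N.+1).
apply: le_trans (_ : \sum_(0 <= n < N.+1 | (0 < n)%N) ((n%:R `^ sigma) ^+ 2)^-1 <= _).
  apply: ler_sum_subpred => [n /andP[/prime_gt0] // | n _].
  by rewrite invr_ge0 exprn_ge0 // powR_ge0.
rewrite big_ltn_cond //= (eq_bigr (fun n => (n%:R `^ (sigma * 2%:R))^-1)); last first.
  by move=> n _; rewrite powRrM powR_mulrn // powR_ge0.
rewrite big_nat_cond [X in _ <= X]big_nat_cond.
by apply: ler_sum_subpred => [n /andP[-> _] // | n _]; rewrite invr_ge0 powR_ge0.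
Qed.

Lemma prime_power_sums_bounded : exists K : R, forall N,
  \sum_(0 <= p < N.+1 | prime p) \sum_(0 <= k < N) a (p ^ k.+1)%N <= K.
Proof.
have [K HK] := large_prime_power_sums_bounded.
exists (fine (Hsig sigma h) + K) => N.
rewrite (bigID (fun p => p%:R <= 4 `^ sigma^-1)) /=.
by apply: lerD; [apply: small_prime_power_sums_le | apply: HK].
Qed.

End PrimePowerSums.

Theorem lemma1 (R : realType) (f g h : nat -> R[i]) (beta sigma : R) :
  arith_multiplicative f -> arith_multiplicative g ->
  (forall n : nat, (0 < n)%N -> normc (f n) <= 1) ->
  (forall n : nat, (0 < n)%N -> normc (g n) <= 1) ->
  (forall n : nat, (0 < n)%N -> g n = dconv f h n) ->
  0 < beta -> (Dist2 beta f g < +oo)%E ->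
  1 / 2 < sigma -> beta <= sigma ->
  (Hsig sigma h < +oo)%E ->
  cvgn (series (fun n : nat => (normc (h n.+1)) ^+ 2 / (n.+1%:R `^ sigma))).
Proof.
move=> hf hg normf normg hconv _ Dist2_fin half_lt_sigma beta_le_sigma Hsig_fin.
have hM := dconv_quotient_multiplicative hf hg hconv.
have [K HK] := prime_power_sums_bounded hf hg normf normg hconv
  half_lt_sigma beta_le_sigma Dist2_fin Hsig_fin.
apply: nondecreasing_is_cvgn.
  by apply: nondecreasing_series => n _ _; apply: sqnorm_term_ge0.
exists (expR K) => _ [N _ <-].
apply: le_trans (multiplicative_sum_le_expR (@sqnorm_term_ge0 _ sigma h)
  (sqnorm_term1 sigma hM) (sqnorm_termM sigma hM) N) _.
by rewrite ler_expR.
Qed.
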